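(* Under Assumptions 1–4 below, with $\tau\in(0,1]$ and $p\in(0,1]$, the iterates of Algorithm 2Direction satisfy, for every $t\ge0$, $$\begin{aligned}\mathbb E_t\|v^{t+1}-\nabla f(z^{t+1})\|^2&\le\Big(1-\frac\tau2\Big)\|v^t-\nabla f(z^t)\|^2+\frac{2\tau^2\omega}{n^2}\sum_{i=1}^n\|h_i^t-\nabla f_i(z^t)\|^2\\&\quad+\Big(4p\Big(1+\frac{2p}{\tau}\Big)L+\frac{8p\tau^2\omega L_{\max}}{n}\Big)D_f(z^t,y^{t+1})+\Big(2p\Big(1+\frac{2p}{\tau}\Big)L^2+\frac{4p\tau^2\omega\widehat L^2}{n}\Big)\mathbb E_t\|x^{t+1}-y^{t+1}\|^2,\end{aligned}$$ where $D_f(x,y)=f(x)-f(y)-\langle\nabla f(y),x-y\rangle$.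
   Context: Setting: $f=\frac1n\sum_{i=1}^nf_i$, $f_i:\mathbb R^d\to\mathbb R$. Assumption 1: each $f_i$ is $L_i$-smooth, $L_{\max}=\max_iL_i$, and $\widehat L>0$ satisfies $\frac1n\sum_i\|\nabla f_i(x)-\nabla f_i(y)\|^2\le\widehat L^2\|x-y\|^2$ for all $x,y$. Assumption 2: $f$ is $L$-smooth. Assumption 3: each $f_i$ is convex and $f$ is $\mu$-strongly convex ($\mu\ge0$) with minimizer $x^*$. Assumption 4: the randomness of all compressors is drawn independently (of each other, of the coins $c^t$, and of the past). Compressor classes: $\mathbb U(\omega)$ ($\omega\ge0$) = stochastic maps $\mathcal C$ with $\mathbb E\mathcal C(x)=x$, $\mathbb E\|\mathcal C(x)-x\|^2\le\omega\|x\|^2$; $\mathbb B(\alpha)$ ($\alpha\in(0,1]$) = possibly stochastic maps with $\mathbb E\|\mathcal C(x)-x\|^2\le(1-\alpha)\|x\|^2$. Algorithm 2Direction: compressors $\mathcal C_i^{D,y},\mathcal C_i^{D,z}\in\mathbb U(\omega)$ (workers), $\mathcal C^P\in\mathbb B(\alpha)$ (server); parameters $\bar L>0$, $\mu\ge0$, $p\in(0,1]$, $\Gamma_0\ge1$, $\tau\in(0,1]$, $x^0,h_1^0,\dots,h_n^0,k^0,v^0\in\mathbb R^d$. Set $\beta=1/(\omega+1)$, $w^0=z^0=u^0=x^0$, $h^0=\frac1n\sum_ih_i^0$, $\theta_{\min}=\frac14\min\{1,\alpha/p,\tau/p,\beta/p\}$. For $t=0,1,\dots$: let $\bar\theta_{t+1}$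 be the largest root of $p\bar L\Gamma_t\theta^2+p(\bar L+\Gamma_t\mu)\theta-(\bar L+\Gamma_t\mu)=0$, $\theta_{t+1}=\min\{\bar\theta_{t+1},\theta_{\min}\}$, $\gamma_{t+1}=p\theta_{t+1}\Gamma_t/(1-p\theta_{t+1})$, $\Gamma_{t+1}=\Gamma_t+\gamma_{t+1}$; $y^{t+1}=\theta_{t+1}w^t+(1-\theta_{t+1})z^t$; $m_i^{t,y}=\mathcal C_i^{D,y}(\nabla f_i(y^{t+1})-h_i^t)$; $g^{t+1}=h^t+\frac1n\sum_im_i^{t,y}$; $u^{t+1}=\arg\min_x\{\langle g^{t+1},x\rangle+\frac{\bar L+\Gamma_t\mu}{2\gamma_{t+1}}\|x-u^t\|^2+\frac\mu2\|x-y^{t+1}\|^2\}$; $q^{t+1}=\arg\min_x\{\langle k^t,x\rangle+\frac{\bar L+\Gamma_t\mu}{2\gamma_{t+1}}\|x-w^t\|^2+\frac\mu2\|x-y^{t+1}\|^2\}$; $w^{t+1}=q^{t+1}+\mathcal C^P(u^{t+1}-q^{t+1})$; $x^{t+1}=\theta_{t+1}u^{t+1}+(1-\theta_{t+1})z^t$; draw $c^t\sim\mathrm{Bernoulli}(p)$, and set $(k^{t+1},z^{t+1})=(v^t,x^{t+1})$ if $c^t=1$, $(k^{t+1},z^{t+1})=(k^t,z^t)$ if $c^t=0$; $m_i^{t,z}=\mathcal C_i^{D,z}(\nabla f_i(z^{t+1})-h_i^t)$; $h_i^{t+1}=h_i^t+\beta m_i^{t,z}$; $v^{t+1}=(1-\tau)v^t+\tau(h^t+\frac1n\sum_im_i^{t,z})$;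 $h^{t+1}=h^t+\frac\beta n\sum_im_i^{t,z}$. $\mathbb E_t$ denotes conditional expectation given the randomness of the first $t$ iterations. *)

From HB Require Import structures.
From mathcomp Require Import all_boot all_order all_algebra.
From mathcomp Require Import all_classical all_reals all_analysis.
Set Implicit Arguments. Unset Strict Implicit. Unset Printing Implicit Defensive.
Import Order.TTheory GRing.Theory Num.Theory.
Import numFieldNormedType.Exports.
Local Open Scope ring_scope.

Section Defs.
Context {R : realType} {d : nat}.

Definition vec := 'rV[R]_d.

Definition dot (u v : vec) : R := \sum_(j < d) u ord0 j * v ord0 j.
Definition sqn (u : vec) : R := dot u u.
Definition enorm (u : vec) : R := Num.sqrt (sqn u).

Definition is_gradient (F : vec -> R) (G : vec -> vec) : Prop :=
  forall x, differentiable F x /\ forall v : vec, 'D_v F x = dot (G x) v.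

Definition smooth (Lc : R) (F : vec -> R) (G : vec -> vec) : Prop :=
  is_gradient F G /\ forall x y, enorm (G x - G y) <= Lc * enorm (x - y).

Definition convex_fun (F : vec -> R) : Prop :=
  forall (x y : vec) (t : R), 0 <= t <= 1 ->
    F (t *: x + (1 - t) *: y) <= t * F x + (1 - t) * F y.

Definition strongly_convex (mu : R) (F : vec -> R) : Prop :=
  forall (x y : vec) (t : R), 0 <= t <= 1 ->
    F (t *: x + (1 - t) *: y)
      <= t * F x + (1 - t) * F y - mu / 2 * t * (1 - t) * sqn (x - y).

Definition avgf n (fs : 'I_n -> vec -> R) (x : vec) : R :=
  n%:R^-1 * \sum_(i < n) fs i x.
Definition avgv n (gs : 'I_n -> vec -> vec) (x : vec) : vec :=
  n%:R^-1 *: \sum_(i < n) gs i x.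

Definition bregman (F : vec -> R) (G : vec -> vec) (x y : vec) : R :=
  F x - F y - dot (G y) (x - y).

Definition unbiased_compressor (dT : measure_display) (T : measurableType dT)
    (omega : R) (P : probability T R) (C : T -> vec -> vec) : Prop :=
  (forall x j, measurable_fun setT (fun xi => C xi x ord0 j)) /\
  (forall x j, P.-integrable setT (fun xi => (C xi x ord0 j)%:E)) /\
  (forall x j, (\int[P]_xi (C xi x ord0 j)%:E = (x ord0 j)%:E)%E) /\
  (forall x, (\int[P]_xi (sqn (C xi x - x))%:E <= (omega * sqn x)%:E)%E).

Definition biased_compressor (dT : measure_display) (T : measurableType dT)
    (alpha : R) (P : probability T R) (C : T -> vec -> vec) : Prop :=
  (forall x j, measurable_fun setT (fun xi => C xi x ord0 j)) /\
  (forall x, (\int[P]_xi (sqn (C xi x - x))%:E <= ((1 - alpha) * sqn x)%:E)%E).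

(* objective of the prox steps defining u^{t+1} and q^{t+1} *)
Definition prox_obj (a gam mu : R) (g center y x : vec) : R :=
  dot g x + a / (2 * gam) * sqn (x - center) + mu / 2 * sqn (x - y).

End Defs.

(* expectation over n independent samples xi_i ~ P_i (product measure,
   realized as iterated integral) *)
Definition fam0 (T : Type) : 'I_0 -> T :=
  fun i => False_rect T (ltac:(by case: i)).

Definition fcons (T : Type) n (x : T) (g : 'I_n -> T) : 'I_n.+1 -> T :=
  fun i => match unlift ord0 i with Some j => g j | None => x end.

Fixpoint iterE {R : realType} (dT : measure_display) (T : measurableType dT) (n : nat) :
    ('I_n -> probability T R) -> (('I_n -> T) -> \bar R) -> \bar R :=
  match n with
  | 0 => fun _ F => F (fam0 T)
  | n'.+1 => fun Ps F =>
      (\int[Ps ord0]_x iterE (fun i => Ps (lift ord0 i)) (fun g => F (fcons x g)))%E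
  end.

Definition bernE {R : realType} (p : R) (F : bool -> \bar R) : \bar R :=
  (p%:E * F true + (1 - p)%:E * F false)%E.

From HB Require Import structures.
From mathcomp Require Import all_boot all_order all_algebra.
From mathcomp Require Import all_classical all_reals all_analysis.
From mathcomp Require Import measurable_realfun.
From mathcomp Require Import ring lra.
Import Order.TTheory GRing.Theory Num.Theory.
Import numFieldNormedType.Exports.
Local Open Scope ring_scope.

(* Condition on the y-samples and on the coin.  Then z+ is fixed and
   v+ - grad f(z+) = (1 - tau)(v - grad f(z+)) + tau/n sum_i (C_i(a_i) - a_i)
   with a_i = grad f_i(z+) - h_i; the compression errors are independent and
   unbiased, hence orthogonal, so the expected square is at most
   (1 - tau)^2 |v - grad f(z+)|^2 + tau^2 omega / n^2 sum_i |a_i|^2.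
   With probability 1 - p, z+ = z and this is already of the required form.
   With probability p, z+ = x+: Young's inequality with weight tau/(2p) moves
   v - grad f(x+) back to v - grad f(z) (the factor (1 - tau)^2 (1 + tau/2)
   stays below 1 - tau/2), and grad f(z) - grad f(x+) and grad f_i(z) - grad f_i(x+)
   are split at y and bounded by cocoercivity, which produces the Bregman
   divergence D_f(z, y), and by smoothness, which produces |x+ - y|^2. *)

Section NonnegIntegral.
Local Open Scope ereal_scope.
Context {d : measure_display} {T : measurableType d} {R : realType}.
Import HBNNSimple.

Lemma integral_cst_probability (P : probability T R) (k : \bar R) :
  \int[P]_x k = k.
Proof.
by rewrite integral_cst //; have /= -> := probability_setT P; rewrite mule1.
Qed.

(* Unlike [ge0_le_integral], no measurability is required: both integrals are
   suprema over the simple functions below the integrand. *)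
Lemma le_ge0_integral (mu : {measure set T -> \bar R}) (f g : T -> \bar R) :
  (forall x, 0 <= f x) -> (forall x, f x <= g x) ->
  \int[mu]_x f x <= \int[mu]_x g x.
Proof.
move=> f0 fg.
have g0 x : 0 <= g x by exact: le_trans (f0 x) (fg x).
rewrite !ge0_integralTE //.
apply: ereal_sup_le => _ [h /= hf <-]; exists h => //= x.
exact: le_trans (hf x) (fg x).
Qed.

Lemma ge0_integral_affine_le (P : probability T R) (a c : R) (psi : T -> \bar R) :
  (0 <= a)%R -> (0 <= c)%R -> (forall x, 0 <= psi x) ->
  \int[P]_x (a%:E + c%:E * psi x) <= a%:E + c%:E * \int[P]_x psi x.
Proof.
move=> a0 c0 psi0.
have [->|cne0] := eqVneq c 0%R.
  under eq_integral do rewrite mul0e adde0.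
  by rewrite mul0e adde0 integral_cst_probability.
have cgt0 : (0 < c)%R by rewrite lt_neqAle eq_sym cne0 c0.
have affine_ge0 x : 0 <= a%:E + c%:E * psi x.
  by apply: adde_ge0; [rewrite lee_fin | apply: mule_ge0; rewrite ?lee_fin].
rewrite ge0_integralTE //.
apply: ge_ereal_sup => _ [h /= hf <-].
(* [g] is a measurable minorant of [psi] with [h <= a + c g]. *)
pose g x := (Num.max (h x - a) 0 / c)%R.
have mh : measurable_fun setT (h : T -> R) by exact: measurable_funPT.
have mg : measurable_fun setT g.
  by apply: measurable_funM => //; apply: measurable_maxr => //; apply: measurable_funB.
have g0 x : (0 <= g x)%R by rewrite /g divr_ge0 // le_max lexx orbT.
have -> : sintegral P h = \int[P]_x (h x)%:E by rewrite integral_nnsfun // patch_setT.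
apply: (@le_trans _ _ (\int[P]_x (a%:E + c%:E * (g x)%:E))).
  apply: ge0_le_integral => //.
  - by move=> x _; rewrite lee_fin.
  - exact/measurable_EFinP.
  - by apply: emeasurable_funD => //; apply: emeasurable_funM => //; exact/measurable_EFinP.
  - move=> x _; rewrite -EFinM -EFinD lee_fin.
    by rewrite /g mulrCA divff ?mulr1 // -lerBlDl le_max lexx.
rewrite ge0_integralD //; first last.
  - by apply: emeasurable_funM => //; exact/measurable_EFinP.
  - by move=> x _; apply: mule_ge0; rewrite lee_fin.
rewrite integral_cst_probability leeD2l //.
rewrite ge0_integralZl_EFin //; first last.
  - exact/measurable_EFinP.
  - by move=> x _; rewrite lee_fin.
apply: lee_wpmul2l; first by rewrite lee_fin.
apply: le_ge0_integral => x; first by rewrite lee_fin.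
move: (hf x) (psi0 x); rewrite /g.
case: (psi x) => [r| |] //= hr r0; rewrite ?leey // lee_fin ler_pdivrMr // mulrC.
rewrite ge_max; apply/andP; split; last by rewrite mulr_ge0 // -lee_fin.
by rewrite lerBlDl; move: hr; rewrite -EFinM -EFinD lee_fin.
Qed.

End NonnegIntegral.

Section IteratedExpectation.
Local Open Scope ereal_scope.
Context {d : measure_display} {T : measurableType d} {R : realType}.

Lemma iterE_ge0 {n} (Ps : 'I_n -> probability T R) (F : ('I_n -> T) -> \bar R) :
  (forall g, 0 <= F g) -> 0 <= iterE Ps F.
Proof.
elim: n Ps F => [|n IH] Ps F F0 /=; first exact: F0.
by apply: integral_ge0 => x _; apply: IH.
Qed.

Lemma le_iterE {n} (Ps : 'I_n -> probability T R) (F G : ('I_n -> T) -> \bar R) :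
  (forall g, 0 <= F g) -> (forall g, F g <= G g) -> iterE Ps F <= iterE Ps G.
Proof.
elim: n Ps F G => [|n IH] Ps F G F0 FG /=; first exact: FG.
by apply: le_ge0_integral => x; [apply: iterE_ge0 | apply: IH].
Qed.

Lemma iterE_cst {n} (Ps : 'I_n -> probability T R) (k : \bar R) :
  iterE Ps (fun _ => k) = k.
Proof.
elim: n Ps k => [|n IH] Ps k //=.
by under eq_integral do rewrite IH; rewrite integral_cst_probability.
Qed.

Lemma iterE_affine_le {n} (Ps : 'I_n -> probability T R) (a c : R)
    (F : ('I_n -> T) -> \bar R) :
  (0 <= a)%R -> (0 <= c)%R -> (forall g, 0 <= F g) ->
  iterE Ps (fun g => a%:E + c%:E * F g) <= a%:E + c%:E * iterE Ps F.
Proof.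
move=> a0 c0; elim: n Ps F => [|n IH] Ps F F0 //=.
apply: le_trans; last first.
  by apply: ge0_integral_affine_le => // x; apply: iterE_ge0.
apply: le_ge0_integral => x; last exact: IH.
apply: iterE_ge0 => g; apply: adde_ge0; first by rewrite lee_fin.
by apply: mule_ge0; rewrite ?lee_fin.
Qed.

End IteratedExpectation.

Section Euclidean.
Context {R : realType} {d : nat}.
Local Notation vec := (@vec R d).
Implicit Types u v w : vec.

Lemma dotC u v : dot u v = dot v u.
Proof. by apply: eq_bigr => j _; rewrite mulrC. Qed.

Lemma dotDl u v w : dot (u + v) w = dot u w + dot v w.
Proof. by rewrite /dot -big_split; apply: eq_bigr => j _; rewrite !mxE mulrDl. Qed.

Lemma dotDr u v w : dot w (u + v) = dot w u + dot w v.
Proof. by rewrite dotC dotDl !(dotC w). Qed.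

Lemma dotZl k u v : dot (k *: u) v = k * dot u v.
Proof. by rewrite /dot mulr_sumr; apply: eq_bigr => j _; rewrite !mxE mulrA. Qed.

Lemma dotZr k u v : dot u (k *: v) = k * dot u v.
Proof. by rewrite dotC dotZl dotC. Qed.

Lemma dotNl u v : dot (- u) v = - dot u v.
Proof. by rewrite -scaleN1r dotZl mulN1r. Qed.

Lemma dotBl u v w : dot (u - v) w = dot u w - dot v w.
Proof. by rewrite dotDl dotNl. Qed.

Lemma dotBr u v w : dot w (u - v) = dot w u - dot w v.
Proof. by rewrite !(dotC w) dotBl. Qed.

Lemma dot0l u : dot 0 u = 0.
Proof. by rewrite /dot big1 // => j _; rewrite mxE mul0r. Qed.

Lemma dot0r u : dot u 0 = 0.
Proof. by rewrite dotC dot0l. Qed.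

Lemma dot_suml n (F : 'I_n -> vec) v :
  dot (\sum_(i < n) F i) v = \sum_(i < n) dot (F i) v.
Proof.
by elim/big_ind2: _ => [|x1 x2 y1 y2 <- <-|//]; rewrite ?dot0l ?dotDl.
Qed.

Lemma sqn_ge0 u : 0 <= sqn u.
Proof. by apply: sumr_ge0 => j _; rewrite -expr2 sqr_ge0. Qed.

Lemma sqnD u v : sqn (u + v) = sqn u + 2 * dot u v + sqn v.
Proof. rewrite /sqn dotDl !dotDr (dotC v u); ring. Qed.

Lemma sqnB u v : sqn (u - v) = sqn u - 2 * dot u v + sqn v.
Proof. rewrite /sqn dotBl !dotBr (dotC v u); ring. Qed.

Lemma sqnZ k u : sqn (k *: u) = k ^+ 2 * sqn u.
Proof. by rewrite /sqn dotZl dotZr mulrA expr2. Qed.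

Lemma sqnN u : sqn (- u) = sqn u.
Proof. by rewrite -scaleN1r sqnZ sqrrN expr1n mul1r. Qed.

Lemma sqnBC u v : sqn (u - v) = sqn (v - u).
Proof. by rewrite -sqnN opprB. Qed.

Lemma sqn0 : sqn (0 : 'rV[R]_d) = 0.
Proof. by rewrite /sqn dot0l. Qed.

Lemma sqn_eq0 u : (sqn u == 0) = (u == 0).
Proof.
apply/idP/eqP => [|->]; last by rewrite sqn0.
rewrite /sqn /dot psumr_eq0 => [/allP u0|j _]; last by rewrite -expr2 sqr_ge0.
apply/rowP => j; rewrite mxE.
by have /(_ (mem_index_enum j)) := u0 j; rewrite mulf_eq0 orbb => /eqP.
Qed.

Lemma enorm_ge0 u : 0 <= enorm u.
Proof. exact: sqrtr_ge0. Qed.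

Lemma enorm_sq u : enorm u ^+ 2 = sqn u.
Proof. by rewrite sqr_sqrtr // sqn_ge0. Qed.

Lemma enorm_eq0 u : (enorm u == 0) = (u == 0).
Proof. by rewrite -sqn_eq0 -enorm_sq sqrf_eq0. Qed.

Lemma enormZ k u : enorm (k *: u) = `|k| * enorm u.
Proof. by rewrite /enorm sqnZ sqrtrM ?sqr_ge0 // sqrtr_sqr. Qed.

Lemma dot_le_enorm u v : dot u v <= enorm u * enorm v.
Proof.
have [->|u0] := eqVneq u 0; first by rewrite dot0l mulr_ge0 ?enorm_ge0.
have [->|v0] := eqVneq v 0; first by rewrite dot0r mulr_ge0 ?enorm_ge0.
set a := enorm v; set b := enorm u.
have apos : 0 < a by rewrite lt_neqAle eq_sym enorm_eq0 v0 enorm_ge0.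
have bpos : 0 < b by rewrite lt_neqAle eq_sym enorm_eq0 u0 enorm_ge0.
(* [0 <= |a u - b v|^2 = 2 a b (a b - <u, v>)] *)
have := sqn_ge0 (a *: u - b *: v).
rewrite sqnB !sqnZ dotZl dotZr -!enorm_sq -/a -/b => H.
have abpos : 0 < b * a by rewrite mulr_gt0.
have : 0 <= (b * a) * (2 * (b * a - dot u v)) by lra.
by rewrite pmulr_rge0 // => ?; lra.
Qed.

Lemma sqnD_young u v s :
  0 < s -> sqn (u + v) <= (1 + s) * sqn u + (1 + s^-1) * sqn v.
Proof.
move=> s0; rewrite sqnD.
(* expand [0 <= |s u - v|^2] and divide by [s] *)
have := sqn_ge0 (s *: u - v); rewrite sqnB sqnZ dotZl => H.
have E : s * (s * sqn u + s^-1 * sqn v - 2 * dot u v)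
    = s ^+ 2 * sqn u - 2 * (s * dot u v) + sqn v by field; rewrite gt_eqF.
have : 0 <= s * (s * sqn u + s^-1 * sqn v - 2 * dot u v) by rewrite E.
by rewrite pmulr_rge0 // => ?; lra.
Qed.

Lemma sqnD_le u v : sqn (u + v) <= 2 * sqn u + 2 * sqn v.
Proof. by have := @sqnD_young u v 1 ltr01; rewrite invr1. Qed.

End Euclidean.

Section SmoothConvex.
Context {R : realType} {d : nat}.
Local Notation vec := (@vec R d).
Context {F : vec -> R} {G : vec -> vec}.
Hypothesis HG : is_gradient F G.

Lemma derive_along_line (x v : vec) (t : R) :
  derivable (fun s : R => F (x + s *: v)) t 1 /\
  'D_1 (fun s : R => F (x + s *: v)) t = dot (G (x + t *: v)) v.
Proof.
have E : (fun h : R => h^-1 *: (((fun s : R => F (x + s *: v)) \o shift t) (h *: 1)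
                                - F (x + t *: v)))
       = (fun h : R => h^-1 *: ((F \o shift (x + t *: v)) (h *: v) - F (x + t *: v))).
  apply/funext => h /=; congr (_ *: (F _ - _)).
  by rewrite [h%:A]mulr1 scalerDl addrCA addrA.
have [dF DF] := HG (x + t *: v).
split; first by rewrite /derivable E; exact: diff_derivable.
by rewrite /derive E -DF.
Qed.

Lemma convex_gradient_le (x w : vec) :
  convex_fun F -> F x + dot (G x) (w - x) <= F w.
Proof.
move=> cF; set v := w - x.
have [dg Dg] := derive_along_line x v 0.
rewrite scale0r addr0 in Dg.
rewrite -Dg -lerBrDl /derive; apply: limr_le; first exact: dg.
near=> h.
have hne : h != 0 by near: h; exact: nbhs_dnbhs_neq.
have hlt : `|h| < 1.
  near: h; apply: nbhs_dnbhs; apply/nbhs_ballP; exists 1 => //= z.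
  by rewrite /ball /= sub0r normrN.
rewrite /= [h%:A]mulr1 addr0 scale0r addr0.
change (h^-1 * (F (x + h *: v) - F x) <= F w - F x).
have [hgt0|hle0] := ltP 0 h.
  have := cF w x h; rewrite ltW //= ltW; last by move: hlt; rewrite gtr0_norm.
  have -> : h *: w + (1 - h) *: x = x + h *: v.
    by apply/rowP => j; rewrite /v !mxE; ring.
  by move=> /(_ isT) H; rewrite ler_pdivrMl //; lra.
(* for [h < 0], [x] is the convex combination of [x + h v] and [w] with weight [1 / (1 - h)] *)
have hlt0 : h < 0 by rewrite lt_neqAle hne.
have h1 : 0 < 1 - h by lra.
set l := (1 - h)^-1.
have l0 : 0 <= l by rewrite invr_ge0 ltW.
have l1 : l <= 1 by rewrite invf_le1 //; lra.
have := cF (x + h *: v) w l; rewrite l0 l1 => /(_ isT).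
have -> : l *: (x + h *: v) + (1 - l) *: w = x.
  by apply/rowP => j; rewrite /v /l !mxE; field; lra.
move=> /(ler_wpM2l (ltW h1)) H.
have E : (1 - h) * (l * F (x + h *: v) + (1 - l) * F w) = F (x + h *: v) - h * F w.
  by rewrite /l; field; lra.
by rewrite E in H; rewrite ler_ndivrMl //; lra.
Unshelve. all: by end_near.
Qed.

Lemma bregman_ge0 (x y : vec) : convex_fun F -> 0 <= bregman F G x y.
Proof. by move=> cF; have := convex_gradient_le y x cF; rewrite /bregman; lra. Qed.

Context {Lc : R}.
Hypothesis G_lipschitz : forall a b, enorm (G a - G b) <= Lc * enorm (a - b).

Lemma sqn_lipschitz a b : sqn (G a - G b) <= Lc ^+ 2 * sqn (a - b).
Proof.
have := G_lipschitz a b; have := enorm_ge0 (G a - G b).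
rewrite -!enorm_sq -exprMn; nra.
Qed.

Lemma lipschitz_gradient_le (y w : vec) :
  F w <= F y + dot (G y) (w - y) + Lc / 2 * sqn (w - y).
Proof.
set v := w - y; set k1 := dot (G y) v; set k2 := Lc / 2 * sqn v.
set phi := (fun s : R => F (y + s *: v)) - k1 *: id - k2 *: (id ^+ 2).
have Dphi t : is_derive t (1:R) phi (dot (G (y + t *: v)) v - k1 - k2 * (2 * t)).
  have [dg Dg] := derive_along_line y v t.
  have D1 : is_derive t 1 (fun s : R => F (y + s *: v)) (dot (G (y + t *: v)) v).
    by rewrite -Dg; exact: derivableP.
  apply: is_derive_eq.
  change (dot (G (y + t *: v)) v - k1 * 1 - k2 * ((2 * t ^+ 1) * 1)
    = dot (G (y + t *: v)) v - k1 - k2 * (2 * t)).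
  by rewrite expr1 !mulr1.
have [c c01] := MVT ltr01 (fun t _ => Dphi t)
  (derivable_within_continuous (fun t _ => @ex_derive _ _ _ _ _ _ _ (Dphi t))).
change (F (y + 1 *: v) - k1 * 1 - k2 * 1 ^+ 2 - (F (y + 0 *: v) - k1 * 0 - k2 * 0 ^+ 2)
  = (dot (G (y + c *: v)) v - k1 - k2 * (2 * c)) * (1 - 0) -> F w <= F y + k1 + k2).
rewrite scale1r scale0r addr0 /v (addrC y) subrK -/v expr1n expr0n /= subr0.
rewrite !mulr1 !mulr0 !subr0 => Hc.
have c0 : 0 < c by move: c01; rewrite in_itv /= => /andP[].
have B : dot (G (y + c *: v)) v - k1 <= Lc * c * sqn v.
  rewrite /k1 -dotBl; apply: le_trans (dot_le_enorm _ _) _.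
  have := G_lipschitz (y + c *: v) y; rewrite addrAC subrr add0r enormZ gtr0_norm // => H.
  apply: le_trans (ler_wpM2r (enorm_ge0 v) H) _.
  by rewrite -enorm_sq expr2 !mulrA.
have : F w - k1 - k2 - F y <= 0 by rewrite Hc /k2; lra.
lra.
Qed.

Lemma sqn_gradB_le_bregman (x y : vec) :
  convex_fun F -> sqn (G x - G y) <= 2 * Lc * bregman F G x y.
Proof.
move=> cF; have [-> | xy] := eqVneq x y.
  by rewrite /bregman !subrr dot0r subrr mulr0 sqn0.
set g := G x - G y.
have exy : 0 < enorm (x - y) by rewrite lt_neqAle eq_sym enorm_eq0 subr_eq0 xy enorm_ge0.
have [Lpos | Lle0] := ltP 0 Lc; last first.
  have lip := G_lipschitz x y.
  have Lge0 : 0 <= Lc by have := le_trans (enorm_ge0 _) lip; rewrite pmulr_lge0.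
  have L0 : Lc = 0 by apply/eqP; rewrite eq_le Lle0 Lge0.
  rewrite L0 mul0r -/g in lip.
  have /eqP -> : g == 0 by rewrite -enorm_eq0 eq_le lip enorm_ge0.
  by rewrite L0 mulr0 mul0r sqn0.
(* descend from [x] along [- g / Lc] and compare with the convexity bound at [y] *)
set il := Lc^-1; set w := x + (- il) *: g.
have h1 := convex_gradient_le y w cF.
have h2 := lipschitz_gradient_le x w.
have e1 : w - x = (- il) *: g by rewrite /w addrC addKr.
have e2 : w - y = (x - y) + (- il) *: g by rewrite /w addrAC.
rewrite e1 e2 dotDr !dotZr sqnZ in h1 h2.
have E : il * dot (G x) g - il * dot (G y) g = il * sqn g by rewrite -mulrBr -dotBl.
have E2 : Lc / 2 * (- il) ^+ 2 = il / 2 by rewrite /il; field; rewrite gt_eqF.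
rewrite mulrA E2 in h2.
have K : il / 2 * sqn g <= bregman F G x y by rewrite /bregman; lra.
have -> : sqn g = 2 * Lc * (il / 2 * sqn g) by rewrite /il; field; rewrite gt_eqF.
by rewrite ler_wpM2l // mulr_ge0 // ltW.
Qed.

End SmoothConvex.

Section UnbiasedCompressor.
Context {R : realType} {d : nat} {dT : measure_display} {T : measurableType dT}.
Local Notation vec := (@vec R d).
Context {omega : R} {P : probability T R} {C : T -> vec -> vec}.
Hypothesis hC : unbiased_compressor omega P C.

Lemma EFin_dot (u v : vec) :
  (dot u v)%:E = (\sum_(j < d) (u ord0 j)%:E * (v ord0 j)%:E)%E.
Proof. by rewrite /dot -sumEFin; apply: eq_bigr => j _; rewrite EFinM. Qed.

Lemma unbiased_compressor_dot (m a : vec) :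
  P.-integrable setT (fun xi => (dot m (C xi a))%:E) /\
  (\int[P]_xi (dot m (C xi a))%:E = (dot m a)%:E)%E.
Proof.
have [_ [iC [eC _]]] := hC.
have iCj j : P.-integrable setT (fun xi => ((m ord0 j)%:E * (C xi a ord0 j)%:E)%E).
  exact: integrableZl.
have -> : (fun xi => (dot m (C xi a))%:E)
    = (fun xi => \sum_(j < d) (m ord0 j)%:E * (C xi a ord0 j)%:E)%E.
  by apply/funext => xi; rewrite EFin_dot.
split; first by apply: integrable_sum => // j _.
rewrite integral_sum // EFin_dot; apply: eq_bigr => j _.
by rewrite integralZl // eC.
Qed.

Lemma measurable_sqn_compress_error (a : vec) :
  measurable_fun setT (fun xi => sqn (C xi a - a)).
Proof.
have [mC _] := hC.
rewrite /sqn /dot; under eq_fun do under eq_bigr do rewrite !mxE.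
by apply: measurable_sum => j; apply: measurable_funM; apply: measurable_funB.
Qed.

(* Unbiasedness kills the cross term [2 s <m, C a - a>]; the variance bound
   handles the quadratic one. *)
Lemma unbiased_compressor_sqn_le (a m : vec) (s K : R) :
  (\int[P]_xi ((sqn (m + s *: (C xi a - a)) + K)%:E)
    <= (sqn m + s ^+ 2 * (omega * sqn a) + K)%:E)%E.
Proof.
have [_ [_ [_ vC]]] := hC.
have [idot edot] := unbiased_compressor_dot m a.
have iq : P.-integrable setT (fun xi => (sqn (C xi a - a))%:E).
  apply/integrableP; split; first exact/measurable_EFinP/measurable_sqn_compress_error.
  under eq_integral do rewrite gee0_abs ?lee_fin ?sqn_ge0 //.
  exact: le_lt_trans (vC a) (ltry _).
set k := sqn m + K - 2 * s * dot m a.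
have E xi : (sqn (m + s *: (C xi a - a)) + K)%:E =
    ((k%:E + (2 * s)%:E * (dot m (C xi a))%:E) + (s ^+ 2)%:E * (sqn (C xi a - a))%:E)%E.
  by rewrite -!EFinM -!EFinD sqnD sqnZ dotZr dotBr /k; congr (_%:E); ring.
under eq_integral do rewrite E.
rewrite integralD //; first last.
- exact: integrableZl.
- apply: integrableD => //; last exact: integrableZl.
  exact: finite_measure_integrable_cst.
rewrite integralD //; first last.
- exact: integrableZl.
- exact: finite_measure_integrable_cst.
rewrite integral_cst_probability integralZl // edot integralZl // -EFinM -EFinD.
have -> : k + 2 * s * dot m a = sqn m + K by rewrite /k; ring.
apply: le_trans (leeD2l _ (lee_wpmul2l _ (vC a))) _; first by rewrite lee_fin sqr_ge0.
by rewrite -EFinM -EFinD lee_fin; lra.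
Qed.

End UnbiasedCompressor.

Lemma fcons0 (U : Type) n (x : U) (g : 'I_n -> U) : fcons x g ord0 = x.
Proof. by rewrite /fcons unlift_none. Qed.

Lemma fconsS (U : Type) n (x : U) (g : 'I_n -> U) j : fcons x g (lift ord0 j) = g j.
Proof. by rewrite /fcons liftK. Qed.

Lemma iterE_sqn_compress_sum_le {R : realType} {d : nat} {dT : measure_display}
    {T : measurableType dT} {omega : R} {k} (Ps : 'I_k -> probability T R)
    (C : 'I_k -> T -> @vec R d -> @vec R d) (a : 'I_k -> @vec R d) (m : @vec R d) (s K : R) :
  (forall i, unbiased_compressor omega (Ps i) (C i)) -> 0 <= omega -> 0 <= K ->
  (iterE Ps (fun xi => (sqn (m + s *: \sum_(i < k) (C i (xi i) (a i) - a i)) + K)%:E)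
    <= (sqn m + s ^+ 2 * (omega * \sum_(i < k) sqn (a i)) + K)%:E)%E.
Proof.
move=> hC om0; elim: k Ps C a m K hC => [|k IH] Ps C a m K hC K0 /=.
  by rewrite !big_ord0 scaler0 addr0 !mulr0 addr0.
set K' := s ^+ 2 * (omega * \sum_(i < k) sqn (a (lift ord0 i))) + K.
have K'0 : 0 <= K'.
  by rewrite addr_ge0 // mulr_ge0 ?sqr_ge0 // mulr_ge0 // sumr_ge0 // => i _; exact: sqn_ge0.
apply: (@le_trans _ _ (\int[Ps ord0]_x
    ((sqn (m + s *: (C ord0 x (a ord0) - a ord0)) + K')%:E))%E).
  apply: le_ge0_integral => x.
    by apply: iterE_ge0 => g; rewrite lee_fin addr_ge0 // sqn_ge0.
  have := IH (fun i => Ps (lift ord0 i)) (fun i => C (lift ord0 i)) (fun i => a (lift ord0 i))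
    (m + s *: (C ord0 x (a ord0) - a ord0)) K (fun i => hC (lift ord0 i)) K0.
  rewrite addrA; apply: le_trans; apply: le_iterE => g.
    by rewrite lee_fin addr_ge0 // sqn_ge0.
  rewrite big_ord_recl fcons0 scalerDr addrA.
  by under eq_bigr do rewrite fconsS.
apply: le_trans (unbiased_compressor_sqn_le (hC ord0) (a ord0) m s K') _.
by rewrite big_ord_recl lee_fin /K'; lra.
Qed.

Lemma bregman_avg {R : realType} {d : nat} n (fs : 'I_n -> @vec R d -> R)
    (gs : 'I_n -> @vec R d -> @vec R d) x y :
  bregman (avgf fs) (avgv gs) x y = n%:R^-1 * \sum_(i < n) bregman (fs i) (gs i) x y.
Proof. by rewrite /bregman /avgf /avgv dotZl dot_suml -!mulrBr -!sumrB. Qed.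

Lemma convex_avgf {R : realType} {d : nat} {n} {fs : 'I_n -> @vec R d -> R} :
  (forall i, convex_fun (fs i)) -> convex_fun (avgf fs).
Proof.
move=> cvx x y t t01; rewrite /avgf mulrCA [(1 - t) * _]mulrCA -mulrDr.
rewrite ler_wpM2l ?invr_ge0 // !mulr_sumr -big_split /=.
by apply: ler_sum => i _; exact: cvx.
Qed.

Lemma v_error_mix_arith {R : realType} (n : nat)
    (p tau omega L Lmax Lhat a2 W S1 Sxp e X D : R) :
  (0 < n)%N -> 0 < p <= 1 -> 0 < tau <= 1 -> 0 <= omega ->
  0 <= a2 -> 0 <= W -> 0 <= e ->
  Sxp <= (1 + tau / (2 * p)) * a2 + (1 + 2 * p / tau) * W ->
  W <= 4 * L * D + 2 * L ^+ 2 * X ->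
  S1 <= 2 * e + 4 * n%:R * Lhat ^+ 2 * X + 8 * Lmax * n%:R * D ->
  p * ((1 - tau) ^+ 2 * Sxp + (tau / n%:R) ^+ 2 * (omega * S1))
  + (1 - p) * ((1 - tau) ^+ 2 * a2 + (tau / n%:R) ^+ 2 * (omega * e))
  <= (1 - tau / 2) * a2 + 2 * tau ^+ 2 * omega / n%:R ^+ 2 * e
     + (4 * p * (1 + 2 * p / tau) * L + 8 * p * tau ^+ 2 * omega * Lmax / n%:R) * D
     + (2 * p * (1 + 2 * p / tau) * L ^+ 2 + 4 * p * tau ^+ 2 * omega * Lhat ^+ 2 / n%:R) * X.
Proof.
move=> n0 /andP[p0 p1] /andP[t0 t1] om0 a0 W0 e0 HS HW HS1.
have np : 0 < n%:R :> R by rewrite ltr0n.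
set q := (1 - tau) ^+ 2; set r := (tau / n%:R) ^+ 2 * omega.
set c1 := 1 + 2 * p / tau; set s0 := tau / (2 * p).
have q0 : 0 <= q by rewrite sqr_ge0.
have q1 : q <= 1 by rewrite /q; nra.
have r0 : 0 <= r by rewrite /r mulr_ge0 // sqr_ge0.
have c10 : 0 <= c1 by rewrite /c1 addr_ge0 // divr_ge0 // ?mulr_ge0 // ltW.
have qSxp : q * Sxp <= q * (1 + s0) * a2 + c1 * (4 * L * D + 2 * L ^+ 2 * X).
  apply: le_trans (ler_wpM2l q0 HS) _.
  rewrite mulrDr mulrA -/s0 -/c1 lerD2l.
  apply: (@le_trans _ _ (c1 * W)); last exact: ler_wpM2l.
  by rewrite mulrA ler_wpM2r // ?mulr_ge0 // ler_piMl.
have rS1 := ler_wpM2l r0 HS1.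
apply: (@le_trans _ _ (p * (q * (1 + s0) * a2 + c1 * (4 * L * D + 2 * L ^+ 2 * X)
          + r * (2 * e + 4 * n%:R * Lhat ^+ 2 * X + 8 * Lmax * n%:R * D))
     + (1 - p) * (q * a2 + r * e))).
  rewrite -/q (mulrA _ omega) -/r (mulrA _ omega e) -/r lerD2r.
  by apply: ler_wpM2l; [exact: ltW | exact: lerD].
rewrite -subr_ge0.
have -> : (1 - tau / 2) * a2 + 2 * tau ^+ 2 * omega / n%:R ^+ 2 * e
     + (4 * p * (1 + 2 * p / tau) * L + 8 * p * tau ^+ 2 * omega * Lmax / n%:R) * D
     + (2 * p * (1 + 2 * p / tau) * L ^+ 2 + 4 * p * tau ^+ 2 * omega * Lhat ^+ 2 / n%:R) * X
  - (p * (q * (1 + s0) * a2 + c1 * (4 * L * D + 2 * L ^+ 2 * X)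
          + r * (2 * e + 4 * n%:R * Lhat ^+ 2 * X + 8 * Lmax * n%:R * D))
     + (1 - p) * (q * a2 + r * e))
  = (1 - tau / 2 - q * (1 + tau / 2)) * a2 + (1 - p) * (r * e).
  by rewrite /q /r /c1 /s0; field; rewrite !gt_eqF // ?mulr_gt0.
by rewrite addr_ge0 // !mulr_ge0 ?subr_ge0 // /q; nra.
Qed.

Section VRecursion.
Context {R : realType} {n d : nat}.
Local Notation vec := (@vec R d).
Variables (fs : 'I_n -> vec -> R) (gs : 'I_n -> vec -> vec) (Ls : 'I_n -> R).
Variables (Lmax Lhat L omega p tau : R) (hs : 'I_n -> vec) (v z y : vec).
Hypotheses (n_gt0 : (0 < n)%N) (omega_ge0 : 0 <= omega).
Hypotheses (p01 : 0 < p <= 1) (tau01 : 0 < tau <= 1).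

Definition v_error_bound (z' : vec) : R :=
  (1 - tau) ^+ 2 * sqn (v - avgv gs z')
  + (tau / n%:R) ^+ 2 * (omega * \sum_(i < n) sqn (gs i z' - hs i)).

Lemma v_error_bound_ge0 z' : 0 <= v_error_bound z'.
Proof.
apply: addr_ge0; apply: mulr_ge0; rewrite ?sqr_ge0 ?sqn_ge0 //.
by apply: mulr_ge0 => //; apply: sumr_ge0 => i _; exact: sqn_ge0.
Qed.

Lemma iterE_v_update_le (dT : measure_display) (T : measurableType dT)
    (Ps : 'I_n -> probability T R) (C : 'I_n -> T -> vec -> vec) (z' : vec) :
  (forall i, unbiased_compressor omega (Ps i) (C i)) ->
  (iterE Ps (fun xi => (sqn ((1 - tau) *: v
      + tau *: (n%:R^-1 *: \sum_(i < n) hs i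
                + n%:R^-1 *: \sum_(i < n) C i (xi i) (gs i z' - hs i))
      - avgv gs z'))%:E) <= (v_error_bound z')%:E)%E.
Proof.
move=> hC.
have := iterE_sqn_compress_sum_le Ps C (fun i => gs i z' - hs i)
  ((1 - tau) *: (v - avgv gs z')) (tau / n%:R) 0 hC omega_ge0 (lexx 0).
rewrite sqnZ addr0 => H; apply: le_trans H; apply: le_iterE => xi.
  by rewrite lee_fin sqn_ge0.
rewrite addr0 lee_fin le_eqVlt; apply/orP; left; apply/eqP; congr sqn.
rewrite !sumrB /avgv.
move: (\sum_(i < n) C i (xi i) _) (\sum_(i < n) gs i z') (\sum_(i < n) hs i) => SC Sg Sh.
by apply/rowP => j; rewrite !mxE; field; rewrite pnatr_eq0 -lt0n.
Qed.

Hypotheses (fs_smooth : forall i, smooth (Ls i) (fs i) (gs i)) (Ls_le : forall i, Ls i <= Lmax).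
Hypothesis gs_mean_sq_lipschitz : forall x x' : vec,
  n%:R^-1 * \sum_(i < n) sqn (gs i x - gs i x') <= Lhat ^+ 2 * sqn (x - x').
Hypotheses (f_smooth : smooth L (avgf fs) (avgv gs)) (fs_convex : forall i, convex_fun (fs i)).

Local Notation D := (bregman (avgf fs) (avgv gs) z y).

Lemma sum_sqn_gradB_le (xp : vec) :
  \sum_(i < n) sqn (gs i xp - hs i) <= 2 * \sum_(i < n) sqn (gs i z - hs i)
     + 4 * n%:R * Lhat ^+ 2 * sqn (xp - y) + 8 * Lmax * n%:R * D.
Proof.
have np : 0 < n%:R :> R by rewrite ltr0n.
apply: (@le_trans _ _ (\sum_(i < n) (2 * sqn (gs i z - hs i)
    + (4 * sqn (gs i xp - gs i y) + 4 * sqn (gs i z - gs i y))))).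
  apply: ler_sum => i _.
  have -> : gs i xp - hs i = (gs i z - hs i) + ((gs i xp - gs i y) + - (gs i z - gs i y)).
    by apply/rowP => j; rewrite !mxE; ring.
  apply: le_trans (sqnD_le _ _) _.
  by have := sqnD_le (gs i xp - gs i y) (- (gs i z - gs i y)); rewrite sqnN; lra.
rewrite !big_split /= -!mulr_sumr.
have Sxp : \sum_(i < n) sqn (gs i xp - gs i y) <= n%:R * (Lhat ^+ 2 * sqn (xp - y)).
  by rewrite -ler_pdivrMl.
have Sz : \sum_(i < n) sqn (gs i z - gs i y) <= 2 * Lmax * (n%:R * D).
  rewrite bregman_avg (mulrA n%:R) mulfV ?gt_eqF // mul1r mulr_sumr.
  apply: ler_sum => i _; have [Gi lipi] := fs_smooth i.
  apply: le_trans (sqn_gradB_le_bregman Gi lipi z y (fs_convex i)) _.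
  by rewrite ler_wpM2r ?(bregman_ge0 Gi) // ler_pM2l.
lra.
Qed.

Lemma sqn_avgv_gradB_le (xp : vec) :
  sqn (avgv gs z - avgv gs xp) <= 4 * L * D + 2 * L ^+ 2 * sqn (xp - y).
Proof.
have [G lip] := f_smooth.
have -> : avgv gs z - avgv gs xp = (avgv gs z - avgv gs y) + (avgv gs y - avgv gs xp).
  by apply/rowP => j; rewrite !mxE; ring.
apply: le_trans (sqnD_le _ _) _.
have := sqn_gradB_le_bregman G lip z y (convex_avgf fs_convex).
have := sqn_lipschitz lip xp y; rewrite sqnBC (sqnBC xp); lra.
Qed.

Definition v_recursion_const : R :=
  (1 - tau / 2) * sqn (v - avgv gs z)
  + 2 * tau ^+ 2 * omega / n%:R ^+ 2 * \sum_(i < n) sqn (hs i - gs i z)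
  + (4 * p * (1 + 2 * p / tau) * L + 8 * p * tau ^+ 2 * omega * Lmax / n%:R) * D.

Definition v_recursion_coef : R :=
  2 * p * (1 + 2 * p / tau) * L ^+ 2 + 4 * p * tau ^+ 2 * omega * Lhat ^+ 2 / n%:R.

(* Only the branch [z+ = xp] of the coin costs anything: Young's inequality with
   weight [tau / (2 p)] moves [v - grad f(xp)] back to [v - grad f(z)]. *)
Lemma v_error_bound_mix (xp : vec) :
  p * v_error_bound xp + (1 - p) * v_error_bound z
    <= v_recursion_const + v_recursion_coef * sqn (xp - y).
Proof.
have [p0 _] := andP p01; have [t0 _] := andP tau01.
rewrite /v_recursion_const /v_recursion_coef.
rewrite (eq_bigr _ (fun i _ => sqnBC (hs i) (gs i z))).
apply: v_error_mix_arith (sqn_avgv_gradB_le xp) (sum_sqn_gradB_le xp) => //.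
- exact: sqn_ge0.
- exact: sqn_ge0.
- by apply: sumr_ge0 => i _; exact: sqn_ge0.
have -> : v - avgv gs xp = (v - avgv gs z) + (avgv gs z - avgv gs xp).
  by apply/rowP => j; rewrite !mxE; ring.
have := @sqnD_young _ _ (v - avgv gs z) (avgv gs z - avgv gs xp) (tau / (2 * p)).
by rewrite invf_div; apply; rewrite divr_gt0 // mulr_gt0.
Qed.

Lemma v_recursion_coef_ge0 : 0 <= v_recursion_coef.
Proof.
have [p0 _] := andP p01; have [t0 _] := andP tau01.
rewrite /v_recursion_coef; apply: addr_ge0;
  by rewrite ?(sqr_ge0, mulr_ge0, divr_ge0, addr_ge0, ler0n, invr_ge0, ltW p0, ltW t0).
Qed.

Lemma v_recursion_const_ge0 : 0 <= v_recursion_const.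
Proof.
have [p0 p1] := andP p01.
have := v_error_bound_mix y; rewrite subrr sqn0 mulr0 addr0; apply: le_trans.
by apply: addr_ge0; apply: mulr_ge0; rewrite ?subr_ge0 ?v_error_bound_ge0 // ltW.
Qed.

Lemma v_recursion (dy dz dp : measure_display) (Ty : measurableType dy)
    (Tz : measurableType dz) (Tp : measurableType dp) (Py : 'I_n -> probability Ty R)
    (Pz : 'I_n -> probability Tz R) (Cz : 'I_n -> Tz -> vec -> vec)
    (Pp : probability Tp R) (xnext : ('I_n -> Ty) -> vec) :
  (forall i, unbiased_compressor omega (Pz i) (Cz i)) ->
  (iterE Py (fun xiy => \int[Pp]_xip bernE p (fun c => iterE Pz (fun xiz =>
     (sqn ((1 - tau) *: v + tau *: (n%:R^-1 *: \sum_(i < n) hs i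
        + n%:R^-1 *: \sum_(i < n) Cz i (xiz i) (gs i (if c then xnext xiy else z) - hs i))
       - avgv gs (if c then xnext xiy else z)))%:E)))
   <= v_recursion_const%:E + v_recursion_coef%:E
      * iterE Py (fun xiy => \int[Pp]_xip bernE p (fun c => iterE Pz (fun xiz =>
          (sqn (xnext xiy - y))%:E))))%E.
Proof.
move=> hCz; have [p0 p1] := andP p01.
have bern_ge0 (F : bool -> \bar R) : (forall c, 0 <= F c)%E -> (0 <= bernE p F)%E.
  move=> F0; apply: adde_ge0; apply: mule_ge0; rewrite ?lee_fin ?subr_ge0 ?F0 //.
  exact: ltW.
have coin xiy : (\int[Pp]_xip bernE p (fun c => iterE Pz (fun xiz =>
     (sqn ((1 - tau) *: v + tau *: (n%:R^-1 *: \sum_(i < n) hs i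
        + n%:R^-1 *: \sum_(i < n) Cz i (xiz i) (gs i (if c then xnext xiy else z) - hs i))
       - avgv gs (if c then xnext xiy else z)))%:E))
    <= (v_recursion_const + v_recursion_coef * sqn (xnext xiy - y))%:E)%E.
  rewrite integral_cst_probability.
  apply: (@le_trans _ _
    ((p * v_error_bound (xnext xiy) + (1 - p) * v_error_bound z)%:E)); last first.
    by rewrite lee_fin v_error_bound_mix.
  rewrite EFinD !EFinM.
  apply: leeD; apply: lee_wpmul2l; rewrite ?lee_fin ?subr_ge0 ?(ltW p0) //;
    exact: iterE_v_update_le.
have -> : (fun xiy => \int[Pp]_xip bernE p (fun c => iterE Pz (fun xiz =>
      (sqn (xnext xiy - y))%:E)))%E = (fun xiy => (sqn (xnext xiy - y))%:E).
  apply/funext => xiy; rewrite iterE_cst integral_cst_probability /bernE.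
  by rewrite -!EFinM -EFinD; congr (_%:E); ring.
apply: le_trans; last first.
  apply: (iterE_affine_le Py _ _ _ v_recursion_const_ge0 v_recursion_coef_ge0).
  by move=> xiy; rewrite lee_fin sqn_ge0.
apply: le_iterE => xiy; last by rewrite -EFinM -EFinD coin.
apply: integral_ge0 => xip _; apply: bern_ge0 => c.
by apply: iterE_ge0 => xiz; rewrite lee_fin sqn_ge0.
Qed.

End VRecursion.

Theorem lemma10 (R : realType) (n d : nat)
  (dy dz dp : measure_display)
  (Ty : measurableType dy) (Tz : measurableType dz) (Tp : measurableType dp)
  (fs : 'I_n -> @vec R d -> R) (gs : 'I_n -> @vec R d -> @vec R d)
  (Ls : 'I_n -> R) (Lmax Lhat L mu : R) (xstar : @vec R d)
  (omega alpha p tau Lbar Gamma : R)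
  (Py : 'I_n -> probability Ty R) (Cy : 'I_n -> Ty -> @vec R d -> @vec R d)
  (Pz : 'I_n -> probability Tz R) (Cz : 'I_n -> Tz -> @vec R d -> @vec R d)
  (Pp : probability Tp R) (Cp : Tp -> @vec R d -> @vec R d)
  (w z u v : @vec R d) (hs : 'I_n -> @vec R d)
  (thetabar : R) (Uf : @vec R d -> @vec R d) :
  (0 < n)%N ->
  (* Assumption 1 *)
  (forall i, smooth (Ls i) (fs i) (gs i)) ->
  (forall i, Ls i <= Lmax) -> (exists i, Ls i = Lmax) ->
  0 < Lhat ->
  (forall x y : @vec R d,
      n%:R^-1 * \sum_(i < n) sqn (gs i x - gs i y) <= Lhat ^+ 2 * sqn (x - y)) ->
  (* Assumption 2 *)
  smooth L (avgf fs) (avgv gs) ->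
  (* Assumption 3 *)
  (forall i, convex_fun (fs i)) -> 0 <= mu -> strongly_convex mu (avgf fs) ->
  (forall x, avgf fs xstar <= avgf fs x) ->
  (* compressors; Assumption 4 is built into the product expectation Et below *)
  0 <= omega -> 0 < alpha <= 1 ->
  (forall i, unbiased_compressor omega (Py i) (Cy i)) ->
  (forall i, unbiased_compressor omega (Pz i) (Cz i)) ->
  biased_compressor alpha Pp Cp ->
  (* parameters *)
  0 < Lbar -> 0 < p <= 1 -> 1 <= Gamma -> 0 < tau <= 1 ->
  let beta := (omega + 1)^-1 in
  let theta_min :=
    4^-1 * Num.min 1 (Num.min (alpha / p) (Num.min (tau / p) (beta / p))) in
  (* thetabar_{t+1} = largest root of the quadratic *)
  p * Lbar * Gamma * thetabar ^+ 2 + p * (Lbar + Gamma * mu) * thetabar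
    - (Lbar + Gamma * mu) = 0 ->
  (forall r : R, p * Lbar * Gamma * r ^+ 2 + p * (Lbar + Gamma * mu) * r
    - (Lbar + Gamma * mu) = 0 -> r <= thetabar) ->
  let theta := Num.min thetabar theta_min in
  let gam := p * theta * Gamma / (1 - p * theta) in
  let y := theta *: w + (1 - theta) *: z in
  let h := n%:R^-1 *: \sum_(i < n) hs i in
  (* u^{t+1} = argmin_x { <g, x> + (Lbar + Gamma mu)/(2 gam) |x - u|^2 + mu/2 |x - y|^2 } *)
  (forall g x : @vec R d,
     prox_obj (Lbar + Gamma * mu) gam mu g u y (Uf g)
       <= prox_obj (Lbar + Gamma * mu) gam mu g u y x) ->
  let xnext (xiy : 'I_n -> Ty) : @vec R d :=
    theta *: Uf (h + n%:R^-1 *: \sum_(i < n) Cy i (xiy i) (gs i y - hs i))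
      + (1 - theta) *: z in
  let znext (xiy : 'I_n -> Ty) (c : bool) : @vec R d :=
    if c then xnext xiy else z in
  let vnext (xiy : 'I_n -> Ty) (c : bool) (xiz : 'I_n -> Tz) : @vec R d :=
    (1 - tau) *: v
      + tau *: (h + n%:R^-1 *: \sum_(i < n) Cz i (xiz i) (gs i (znext xiy c) - hs i)) in
  let Et (F : ('I_n -> Ty) -> bool -> ('I_n -> Tz) -> \bar R) : \bar R :=
    iterE Py (fun xiy => \int[Pp]_xip
      bernE p (fun c => iterE Pz (fun xiz => F xiy c xiz)))%E in
  (Et (fun xiy c xiz => (sqn (vnext xiy c xiz - avgv gs (znext xiy c)))%:E)
   <= ((1 - tau / 2) * sqn (v - avgv gs z)
       + 2 * tau ^+ 2 * omega / n%:R ^+ 2 * \sum_(i < n) sqn (hs i - gs i z)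
       + (4 * p * (1 + 2 * p / tau) * L + 8 * p * tau ^+ 2 * omega * Lmax / n%:R)
           * bregman (avgf fs) (avgv gs) z y)%:E
      + (2 * p * (1 + 2 * p / tau) * L ^+ 2
           + 4 * p * tau ^+ 2 * omega * Lhat ^+ 2 / n%:R)%:E
        * Et (fun xiy _ _ => (sqn (xnext xiy - y))%:E))%E.
Proof.
move=> n_gt0 fs_smooth Ls_le _ _ gs_mean_sq_lipschitz f_smooth fs_convex _ _ _ omega_ge0 _ _
  Cz_unbiased _ _ p01 _ tau01 beta theta_min _ _ theta gam y h _.
by apply: (v_recursion _ _ Ls).
Qed.
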